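(* Let $V^{(t+1)}=V^{(t)}-\alpha_t\nabla L_t$ with $\alpha_t>0$. If $\alpha_tL_t\le\frac{1}{30p}$, then \[ L_{t+1}\le L_t-\frac{5\alpha_t\lVert\nabla L_t\rVert^2}{6}. \]
   Context: Standing assumption: $h=1/p$ with $p\ge1$. Huberized ReLU: $\phi(z)=0$ for $z<0$, $z^2/(2h)$ for $z\in[0,h]$, $z-h/2$ for $z>h$. Data $(x_1,y_1),\ldots,(x_n,y_n)$ with $x_s\in\mathbb{R}^{d+1}$, $\lVert x_s\rVert=1$, $y_s\in\{-1,1\}$. For $V\in\mathbb{R}^{2p\times(d+1)}$ with rows $v_1,\ldots,v_{2p}$ and fixed $u_1=\cdots=u_p=1$, $u_{p+1}=\cdots=u_{2p}=-1$: $f_V(x)=\sum_{i=1}^{2p}u_i\phi(v_i\cdot x)$, $L(V)=\frac1n\sum_s\ln(1+\exp(-y_sf_V(x_s)))$. $L_t=L(V^{(t)})$, $\nabla L_t=\nabla_VL|_{V=V^{(t)}}$, and $\lVert\cdot\rVert$ is the Frobenius norm. *)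

From HB Require Import structures.
From mathcomp Require Import all_boot all_order all_algebra.
From mathcomp Require Import all_classical all_reals all_analysis.
Set Implicit Arguments. Unset Strict Implicit. Unset Printing Implicit Defensive.
Import Order.TTheory GRing.Theory Num.Theory.
Local Open Scope ring_scope.

Section Defs.
Variable R : realType.

Definition hrelu (h z : R) : R :=
  if z < 0 then 0 else if z <= h then z ^+ 2 / (2 * h) else z - h / 2.

Definition uw (p : nat) (i : 'I_(p + p)) : R := if (i < p)%N then 1 else -1.

Definition rowdot (p d : nat) (V : 'M[R]_(p + p, d.+1)) (i : 'I_(p + p))
  (x : 'rV[R]_(d.+1)) : R := \sum_(j < d.+1) V i j * x 0 j.

Definition fnet (p d : nat) (V : 'M[R]_(p + p, d.+1)) (x : 'rV[R]_(d.+1)) : R :=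
  \sum_(i < p + p) uw i * hrelu (p%:R)^-1 (rowdot V i x).

Definition loss (p d n : nat) (x : 'I_n -> 'rV[R]_(d.+1)) (y : 'I_n -> R)
  (V : 'M[R]_(p + p, d.+1)) : R :=
  (n%:R)^-1 * \sum_(s < n) ln (1 + expR (- (y s * fnet V (x s)))).

Definition gradM (m k : nat) (F : 'M[R]_(m, k) -> R) (V : 'M[R]_(m, k))
  : 'M[R]_(m, k) :=
  \matrix_(i < m, j < k) derive1 (fun t : R => F (V + t *: delta_mx i j)) 0.

Definition frob2 (m k : nat) (A : 'M[R]_(m, k)) : R :=
  \sum_(i < m) \sum_(j < k) A i j ^+ 2.

End Defs.

(* Write G for the gradient, L for the loss and Q = p alpha^2 |G|^2.  Along the
   step, the margin y_s f(x_s) changes by a first-order term A_s with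
   A_s^2 <= 2 Q, whose logistic-weighted mean is exactly alpha |G|^2, plus a
   remainder |B_s| <= Q/2 coming from the curvature 1/h = p of the Huberized
   ReLU.  The logistic loss l(z) = ln (1 + e^-z) satisfies
   l(z + e) <= l(z) - g e + 10/9 g e^2 for e >= -1/10, with g = -l'(z) <= l(z).
   Cauchy-Schwarz gives |G|^2 <= 2 p L^2, so the step condition p alpha L <= 1/30
   yields Q <= 1/450; then all error terms of sample s are at most 5 Q g_s, and
   5 Q L = 5 (p alpha L) alpha |G|^2 <= alpha |G|^2 / 6. *)

From HB Require Import structures.
From mathcomp Require Import all_boot all_order all_algebra.
From mathcomp Require Import all_classical all_reals all_analysis.
From mathcomp Require Import ring lra.

Set Implicit Arguments.
Unset Strict Implicit.
Unset Printing Implicit Defensive.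
Import Order.TTheory GRing.Theory Num.Theory numFieldNormedType.Exports.
Local Open Scope ring_scope.

Section CauchySchwarz.
Variable R : realFieldType.

Lemma weighted_cauchy_schwarz m (w a b : 'I_m -> R) : (forall k, 0 <= w k) ->
  (\sum_k w k * a k * b k) ^+ 2 <= (\sum_k w k * a k ^+ 2) * (\sum_k w k * b k ^+ 2).
Proof.
move=> w_ge0.
set Sab := \sum_k _; set Saa := \sum_k _; set Sbb := \sum_k _.
have : 0 <= \sum_k \sum_l w k * w l * (a k * b l - a l * b k) ^+ 2.
  by do 2!apply: sumr_ge0 => ? _; rewrite mulr_ge0 ?sqr_ge0 ?mulr_ge0.
have -> : \sum_k \sum_l w k * w l * (a k * b l - a l * b k) ^+ 2 =
    Saa * Sbb + Sbb * Saa - 2 * (Sab * Sab).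
  rewrite !big_distrlr mulr_sumr -!big_split -sumrB; apply: eq_bigr => k _.
  rewrite mulr_sumr -!big_split -sumrB; apply: eq_bigr => l _ /=; ring.
rewrite (mulrC Sbb); nra.
Qed.

Lemma cauchy_schwarz m (a b : 'I_m -> R) :
  (\sum_k a k * b k) ^+ 2 <= (\sum_k a k ^+ 2) * (\sum_k b k ^+ 2).
Proof.
have := @weighted_cauchy_schwarz m (fun _ => 1) a b (fun _ => ler01).
by under eq_bigr do rewrite mul1r; under [X in _ <= X * _]eq_bigr do rewrite mul1r;
   under [X in _ <= _ * X]eq_bigr do rewrite mul1r.
Qed.

End CauchySchwarz.

Section QuadraticRemainder.
Variable R : realType.
Local Open Scope classical_set_scope.

Lemma is_derive_quadratic_remainder (f : R -> R) (a D K : R) :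
  (forall s, `|f (a + s) - f a - D * s| <= K * s ^+ 2) -> is_derive a 1 f D.
Proof.
move=> rem_le.
have slope : (fun s : R => s^-1 * (f (a + s) - f a)) @ 0^' --> D.
  apply/cvgrPdist_lt => e e_gt0; near=> s.
  have s_neq0 : s != 0 by near: s; exact: nbhs_dnbhs_neq.
  have s_small : `|s| * (`|K| + 1) < e.
    rewrite -ltr_pdivlMr ?ltr_pwDr//; near: s; apply: dnbhs0_lt.
    by rewrite divr_gt0 ?ltr_pwDr.
  have -> : D - s^-1 * (f (a + s) - f a) = - (s^-1 * (f (a + s) - f a - D * s)).
    by field.
  rewrite normrN normrM normfV.
  have s_gt0 : 0 < `|s| by rewrite normr_gt0.
  have := rem_le s; rewrite -(real_normK (num_real s)) => le_rem.
  apply: le_lt_trans (ler_wpM2l _ le_rem) _; first by rewrite invr_ge0 ltW.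
  have -> : `|s|^-1 * (K * `|s| ^+ 2) = K * `|s| by field; rewrite gt_eqF.
  have := ler_norm K; nra.
have difference_quotientE : (fun s : R => s^-1 *: ((f \o shift a) (s *: 1) - f a)) =
    (fun s => s^-1 * (f (a + s) - f a)).
  by apply/funext => s /=; rewrite /shift /= -[s%:A]/(s * 1) mulr1 (addrC s a).
split; first by apply/cvg_ex; exists D; rewrite /= difference_quotientE.
by rewrite /derive difference_quotientE; exact: cvg_lim slope.
Unshelve. all: by end_near.
Qed.

End QuadraticRemainder.

Section HuberizedReLU.
Variable R : realType.
Implicit Types h a s z : R.

Definition hrelu_deriv h z : R := if z < 0 then 0 else if z <= h then z / h else 1.

Lemma hrelu_deriv_itv h z : 0 < h -> 0 <= hrelu_deriv h z <= 1.
Proof.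
move=> h_gt0; rewrite /hrelu_deriv; case: (ltP z 0) => [_|z_ge0]; first by rewrite lexx ler01.
case: (leP z h) => [z_le_h|_]; last by rewrite ler01 lexx.
by rewrite divr_ge0 ?(ltW h_gt0) //= ler_pdivrMr // mul1r.
Qed.

Lemma hrelu_taylor h a s : 0 < h ->
  0 <= hrelu h (a + s) - hrelu h a - hrelu_deriv h a * s <= s ^+ 2 / (2 * h).
Proof.
move=> h_gt0.
have hreluE z : hrelu h z =
    (if z < 0 then 0 else if z <= h then z ^+ 2 else 2 * h * z - h ^+ 2) / (2 * h).
  by rewrite /hrelu; case: ifP => _; [rewrite mul0r | case: ifP => _ //; field; rewrite gt_eqF].
have hrelu_derivE z : hrelu_deriv h z =
    (if z < 0 then 0 else if z <= h then 2 * z else 2 * h) / (2 * h).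
  by rewrite /hrelu_deriv; case: ifP => _; [rewrite mul0r | case: ifP => _; field; rewrite gt_eqF].
rewrite !hreluE hrelu_derivE.
set A := if a + s < 0 then _ else _; set B := if a < 0 then _ else _.
set C := if a < 0 then 0 else _.
have -> : A / (2 * h) - B / (2 * h) - C / (2 * h) * s = (A - B - C * s) / (2 * h).
  by field; rewrite gt_eqF.
have inv2h_gt0 : 0 < (2 * h)^-1 by rewrite invr_gt0 mulr_gt0.
rewrite pmulr_lge0 // ler_pM2r // {}/A {}/B {}/C.
by case: (ltP (a + s) 0) => ?; case: (leP (a + s) h) => ?;
  case: (ltP a 0) => ?; case: (leP a h) => ?; apply/andP; split; nra.
Qed.

Lemma is_derive_hrelu h a : 0 < h -> is_derive a 1 (hrelu h) (hrelu_deriv h a).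
Proof.
move=> h_gt0; apply: (is_derive_quadratic_remainder (K := (2 * h)^-1)) => s.
have /andP[rem_ge0 rem_le] := hrelu_taylor a s h_gt0.
by rewrite ger0_norm // [_ * s ^+ 2]mulrC.
Qed.

End HuberizedReLU.

Section Logistic.
Variable R : realType.
Implicit Types z e a b q x : R.

Definition logistic z : R := ln (1 + expR (- z)).

Definition logistic_weight z : R := expR (- z) / (1 + expR (- z)).

Lemma logistic_weight_ge0 z : 0 <= logistic_weight z.
Proof. by rewrite divr_ge0 ?addr_ge0 ?ler01 ?expR_ge0. Qed.

Lemma logistic_weight_le z : logistic_weight z <= logistic z.
Proof.
rewrite /logistic_weight /logistic; set u := expR (- z).
have u_gt0 : 0 < u := expR_gt0 _.
have : -1 < - (u / (1 + u)) by rewrite ltrNl opprK ltr_pdivrMr ?addr_gt0 //; lra.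
move/le_ln1Dx; have -> : 1 - u / (1 + u) = (1 + u)^-1 by field; lra.
rewrite lnV ?posrE ?addr_gt0 //; lra.
Qed.

Lemma is_derive_logistic z : is_derive z 1 logistic (- logistic_weight z).
Proof.
have dexp : is_derive z 1 (fun t => expR (- t)) (expR (- z) * -1) by exact: is_derive1_comp.
have dsum : is_derive z 1 (fun t => 1 + expR (- t)) (- expR (- z)).
  (* [dexp] enters through instance resolution of [is_derive] *)
  by apply: is_derive_eq; rewrite add0r mul1r mulrN1.
have one_plus_gt0 : 0 < 1 + expR (- z) by rewrite addr_gt0 ?expR_gt0.
have := is_derive1_comp (g := fun t => 1 + expR (- t)) (is_derive1_ln one_plus_gt0) dsum.
rewrite /logistic_weight mulrN mulrC; exact.
Qed.

Lemma expR_le_quadratic x : x <= 10^-1 -> expR x <= 1 + x + 10 / 9 * x ^+ 2.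
Proof.
(* e^x <= 1 / (1 - x), by e^-x >= 1 - x *)
move=> x_le.
have := expR_ge1Dx (- x); have : expR x * expR (- x) = 1 by rewrite -expRD subrr expR0.
have := expR_gt0 x; nra.
Qed.

Lemma logistic_le_quadratic z e : - e <= 10^-1 ->
  logistic (z + e) <= logistic z - logistic_weight z * e + 10 / 9 * logistic_weight z * e ^+ 2.
Proof.
move=> e_ge; rewrite /logistic /logistic_weight; set u := expR (- z).
have u_gt0 : 0 < u := expR_gt0 _.
set q := u / (1 + u).
have q_gt0 : 0 < q by rewrite divr_gt0 // addr_gt0.
have q_lt1 : q < 1 by rewrite ltr_pdivrMr ?addr_gt0 //; lra.
have := expR_gt0 (- e); have := expR_le_quadratic e_ge.
(* factor out 1 + e^-z, then use ln (1 + v) <= v *)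
have -> : 1 + expR (- (z + e)) = (1 + u) * (1 + q * (expR (- e) - 1)).
  by rewrite opprD expRD /q /u; field; rewrite gt_eqF // addr_gt0 // expR_gt0.
move=> exp_le exp_gt0; rewrite lnM ?posrE; last 2 first; [exact: addr_gt0 | nra |].
have := @le_ln1Dx _ (q * (expR (- e) - 1)) ltac:(nra); nra.
Qed.

Lemma logistic_perturb_le z a b q :
  a ^+ 2 <= 2 * q -> `|b| <= q / 2 -> q <= 450^-1 ->
  logistic (z + (a + b)) <= logistic z - logistic_weight z * a + 5 * q * logistic_weight z.
Proof.
move=> a_le b_le q_le.
have w_ge0 := logistic_weight_ge0 z.
have q_ge0 : 0 <= q by have := sqr_ge0 a; lra.
have b_ge : - b <= q / 2 by apply: le_trans b_le; rewrite -normrN ler_norm.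
have b2_le : b ^+ 2 <= q / 900.
  rewrite -real_normK ?num_real //; have := normr_ge0 b; nra.
have a_ge : - a <= 15^-1 by nra.
have e_ge : - (a + b) <= 10^-1 by lra.
(* 81/20 is chosen so that 1/2 + 10/9 * 81/20 = 5 *)
have e2_le : (a + b) ^+ 2 <= 81 / 20 * q by have := sqr_ge0 (a - b); lra.
apply: le_trans (logistic_le_quadratic z e_ge) _.
have := ler_wpM2l w_ge0 b_ge; have := ler_wpM2l w_ge0 e2_le; lra.
Qed.

End Logistic.

Section NetworkAlgebra.
Variables (R : realType) (p d : nat).
Implicit Types (V W : 'M[R]_(p + p, d.+1)) (xx : 'rV[R]_d.+1) (i k : 'I_(p + p)) (j : 'I_d.+1).

Lemma rowdotD V W i xx : rowdot (V + W) i xx = rowdot V i xx + rowdot W i xx.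
Proof. by rewrite /rowdot -big_split; apply: eq_bigr => j _; rewrite mxE mulrDl. Qed.

Lemma rowdotZ (c : R) W i xx : rowdot (c *: W) i xx = c * rowdot W i xx.
Proof. by rewrite /rowdot mulr_sumr; apply: eq_bigr => j _; rewrite mxE mulrA. Qed.

Lemma rowdot_delta i j k xx : rowdot (delta_mx i j) k xx = (i == k)%:R * xx 0 j.
Proof.
rewrite /rowdot (bigD1 j) //= big1 ?addr0 => [|l /negbTE l_neq_j]; rewrite mxE.
  by rewrite eqxx andbT eq_sym.
by rewrite eq_sym l_neq_j andbF mul0r.
Qed.

Lemma sum_rowdot_sqr_le W xx :
  \sum_i rowdot W i xx ^+ 2 <= frob2 W * \sum_j xx 0 j ^+ 2.
Proof. by rewrite /frob2 mulr_suml; apply: ler_sum => i _; exact: cauchy_schwarz. Qed.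

Lemma uw_sqr i : uw R i ^+ 2 = 1.
Proof. by rewrite /uw; case: ifP => _; rewrite ?sqrrN expr1n. Qed.

Lemma is_derive_fnet_delta V i j xx : (0 < p)%N ->
  is_derive (0 : R) 1 (fun t => fnet (V + t *: delta_mx i j) xx)
    (uw R i * hrelu_deriv (p%:R^-1) (rowdot V i xx) * xx 0 j).
Proof.
move=> p_gt0; have h_gt0 : 0 < (p%:R : R)^-1 by rewrite invr_gt0 ltr0n.
set h := (p%:R : R)^-1 in h_gt0 *; pose c k := rowdot (delta_mx i j) k xx.
have dunit k : is_derive (0 : R) 1 (fun t => hrelu h (rowdot V k xx + t * c k))
    (hrelu_deriv h (rowdot V k xx) * c k).
  have dline : is_derive (0 : R) 1 (fun t => rowdot V k xx + t * c k) (c k).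
    by apply: is_derive_eq; rewrite scale0r !add0r mul1r -[_%:A]/(c k * 1) mulr1.
  have := is_derive1_comp (g := fun t => rowdot V k xx + t * c k)
    (is_derive_hrelu _ h_gt0) dline.
  by rewrite mul0r addr0.
have -> : (fun t => fnet (V + t *: delta_mx i j) xx) =
    \sum_k uw R k \*: (fun t => hrelu h (rowdot V k xx + t * c k)).
  by apply/funext => t; rewrite fct_sumE /fnet; apply: eq_bigr => k _; rewrite rowdotD rowdotZ.
apply: is_derive_eq (is_derive_sum (fun k => is_deriveZ (uw R k) (dunit k))) _.
rewrite (bigD1 i) //= big1 ?addr0 => [|k k_neq_i]; rewrite /c rowdot_delta.
  by rewrite eqxx mul1r -[_ *: _]/(_ * _) mulrA.
by rewrite eq_sym (negbTE k_neq_i) mul0r mulr0 scaler0.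
Qed.

Lemma frob2_ge0 (m l : nat) (A : 'M[R]_(m, l)) : 0 <= frob2 A.
Proof. by do 2!apply: sumr_ge0 => ? _; exact: sqr_ge0. Qed.

End NetworkAlgebra.

Section LossDescent.
Variables (R : realType) (p d n : nat) (x : 'I_n -> 'rV[R]_d.+1) (y : 'I_n -> R).
Implicit Types (V : 'M[R]_(p + p, d.+1)) (i : 'I_(p + p)) (j : 'I_d.+1) (s : 'I_n).
Hypotheses (p_gt0 : (0 < p)%N) (n_gt0 : (0 < n)%N).
Hypothesis x_normed : forall s, \sum_j x s 0 j ^+ 2 = 1.
Hypothesis y_sign : forall s, y s = 1 \/ y s = -1.

Let h : R := p%:R^-1.
Definition margin V s := y s * fnet V (x s).

Lemma y_sqr s : y s ^+ 2 = 1.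
Proof. by case: (y_sign s) => ->; rewrite ?sqrrN expr1n. Qed.

Lemma gradM_loss V i j : gradM (loss x y) V i j =
  - (n%:R^-1 * \sum_s logistic_weight (margin V s) * y s *
       uw R i * hrelu_deriv h (rowdot V i (x s)) * x s 0 j).
Proof.
rewrite /gradM mxE derive1E.
have dmargin s := is_deriveZ (y s) (is_derive_fnet_delta V i j (x s) p_gt0).
have dlogistic s := is_derive1_comp (is_derive_logistic _) (dmargin s).
have -> : (fun t => loss x y (V + t *: delta_mx i j)) =
    n%:R^-1 \*: \sum_s (@logistic R \o (y s \*: fun t => fnet (V + t *: delta_mx i j) (x s))).
  by apply/funext => t; rewrite /= fct_sumE.
have [_ ->] := is_deriveZ (n%:R^-1) (is_derive_sum dlogistic).
rewrite -mulrN -sumrN; congr (_ * _); apply: eq_bigr => s _ /=.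
rewrite scale0r addr0 -[y s *: fnet V (x s)]/(y s * _) -[y s *: (_ * _)]/(y s * _).
by rewrite /margin; ring.
Qed.

Lemma sum_weight_le_loss V : n%:R^-1 * \sum_s logistic_weight (margin V s) <= loss x y V.
Proof.
rewrite /loss ler_wpM2l ?invr_ge0 ?ler0n //.
by apply: ler_sum => s _; exact: logistic_weight_le.
Qed.

Lemma sum_uw_hrelu_deriv_sqr_le (a : 'I_(p + p) -> R) :
  \sum_i (uw R i * hrelu_deriv h (a i)) ^+ 2 <= 2 * p%:R.
Proof.
have h_gt0 : 0 < h by rewrite invr_gt0 ltr0n.
have -> : 2 * p%:R = \sum_(i < p + p) (1 : R) by rewrite sumr_const card_ord natrD; ring.
apply: ler_sum => i _; rewrite exprMn uw_sqr mul1r.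
by have /andP[? ?] := hrelu_deriv_itv (a i) h_gt0; nra.
Qed.

Lemma sum_sqr_grad_fnet_le V s :
  \sum_i \sum_j (uw R i * hrelu_deriv h (rowdot V i (x s)) * x s 0 j) ^+ 2 <= 2 * p%:R.
Proof.
under eq_bigr do under eq_bigr do rewrite exprMn.
under eq_bigr do rewrite -mulr_sumr x_normed mulr1.
exact: sum_uw_hrelu_deriv_sqr_le.
Qed.

Lemma frob2_gradM_loss_le V : frob2 (gradM (loss x y) V) <= 2 * p%:R * loss x y V ^+ 2.
Proof.
set W := \sum_s logistic_weight (margin V s).
pose b i j s := uw R i * hrelu_deriv h (rowdot V i (x s)) * x s 0 j.
have entry_le i j : gradM (loss x y) V i j ^+ 2 <=
    n%:R^-1 ^+ 2 * (W * \sum_s logistic_weight (margin V s) * b i j s ^+ 2).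
  rewrite gradM_loss sqrrN exprMn ler_wpM2l ?sqr_ge0 //.
  have := weighted_cauchy_schwarz y (b i j) (fun s => logistic_weight_ge0 (margin V s)).
  have -> : \sum_s logistic_weight (margin V s) * y s ^+ 2 = W.
    by apply: eq_bigr => s _; rewrite y_sqr mulr1.
  by under eq_bigr do rewrite /b !mulrA.
have frob2_le : frob2 (gradM (loss x y) V) <=
    n%:R^-1 ^+ 2 * W * \sum_i \sum_j \sum_s logistic_weight (margin V s) * b i j s ^+ 2.
  rewrite /frob2 mulr_sumr; apply: ler_sum => i _.
  by rewrite mulr_sumr; apply: ler_sum => j _; rewrite -mulrA entry_le.
have sum_b_le :
    \sum_i \sum_j \sum_s logistic_weight (margin V s) * b i j s ^+ 2 <= W * (2 * p%:R).
  under eq_bigr do rewrite exchange_big /=; rewrite exchange_big /= /W mulr_suml.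
  apply: ler_sum => s _; under eq_bigr do rewrite -mulr_sumr.
  by rewrite -mulr_sumr ler_wpM2l ?logistic_weight_ge0 //; exact: sum_sqr_grad_fnet_le.
have W_ge0 : 0 <= W by apply: sumr_ge0 => s _; exact: logistic_weight_ge0.
have mean_W_ge0 : 0 <= n%:R^-1 * W by rewrite mulr_ge0 ?invr_ge0.
apply: le_trans frob2_le (le_trans (ler_wpM2l _ sum_b_le) _); first by rewrite mulr_ge0 ?sqr_ge0.
have -> : n%:R^-1 ^+ 2 * W * (W * (2 * p%:R)) = 2 * p%:R * (n%:R^-1 * W) ^+ 2 by ring.
have W_le := sum_weight_le_loss V.
by rewrite ler_wpM2l ?mulr_ge0 ?ler0n // lerXn2r ?nnegrE // (le_trans mean_W_ge0).
Qed.

Lemma loss_ge0 V : 0 <= loss x y V.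
Proof.
apply: le_trans (sum_weight_le_loss V); rewrite mulr_ge0 ?invr_ge0 ?ler0n //.
by apply: sumr_ge0 => s _; exact: logistic_weight_ge0.
Qed.

Variables (V : 'M[R]_(p + p, d.+1)) (alpha : R).

Let G := gradM (loss x y) V.
Let Q := p%:R * alpha ^+ 2 * frob2 G.
Let pre i s := rowdot V i (x s).
Let del i s := - alpha * rowdot G i (x s).
Let lin s := y s * \sum_i uw R i * hrelu_deriv h (pre i s) * del i s.
Let curv s := y s * \sum_i uw R i *
  (hrelu h (pre i s + del i s) - hrelu h (pre i s) - hrelu_deriv h (pre i s) * del i s).

Lemma margin_step s : margin (V - alpha *: G) s = margin V s + (lin s + curv s).
Proof.
rewrite /margin /lin /curv -!mulrDr /fnet -!big_split; congr (_ * _).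
by apply: eq_bigr => i _; rewrite /= -scaleNr rowdotD rowdotZ /pre /del /h; ring.
Qed.

Lemma sum_del_sqr_le s : \sum_i del i s ^+ 2 <= alpha ^+ 2 * frob2 G.
Proof.
under eq_bigr do rewrite /del exprMn sqrrN.
rewrite -mulr_sumr ler_wpM2l ?sqr_ge0 //.
by have := sum_rowdot_sqr_le G (x s); rewrite x_normed mulr1.
Qed.

Lemma lin_sqr_le s : lin s ^+ 2 <= 2 * Q.
Proof.
rewrite /lin exprMn y_sqr mul1r.
have -> : 2 * Q = 2 * p%:R * (alpha ^+ 2 * frob2 G) by rewrite /Q; ring.
apply: le_trans (cauchy_schwarz _ _) _.
apply: ler_pM.
- by apply: sumr_ge0 => i _; exact: sqr_ge0.
- by apply: sumr_ge0 => i _; exact: sqr_ge0.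
- exact: sum_uw_hrelu_deriv_sqr_le.
- exact: sum_del_sqr_le.
Qed.

Lemma curv_abs_le s : `|curv s| <= Q / 2.
Proof.
have y_norm : `|y s| = 1 by case: (y_sign s) => ->; rewrite ?normrN normr1.
have h_gt0 : 0 < h by rewrite invr_gt0 ltr0n.
rewrite /curv normrM y_norm mul1r; apply: le_trans (ler_norm_sum _ _ _) _.
have -> : Q / 2 = p%:R / 2 * (alpha ^+ 2 * frob2 G) by rewrite /Q; ring.
apply: le_trans (ler_wpM2l _ (sum_del_sqr_le s)); last by rewrite divr_ge0 ?ler0n.
rewrite mulr_sumr; apply: ler_sum => i _.
have uw_norm : `|uw R i| = 1 by rewrite /uw; case: ifP; rewrite ?normrN normr1.
have /andP[rem_ge0 rem_le] := hrelu_taylor (pre i s) (del i s) h_gt0.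
rewrite normrM uw_norm mul1r ger0_norm //; apply: le_trans rem_le _.
by rewrite /h invfM invrK mulrC (mulrC _^-1).
Qed.

Lemma sum_weight_lin : \sum_s logistic_weight (margin V s) * lin s = n%:R * alpha * frob2 G.
Proof.
have n_neq0 : n%:R != 0 :> R by rewrite pnatr_eq0 -lt0n.
have gradE i j : - (n%:R * G i j) =
    \sum_s logistic_weight (margin V s) * y s * uw R i * hrelu_deriv h (pre i s) * x s 0 j.
  by rewrite /G gradM_loss mulrN opprK mulrA mulfV ?mul1r.
have linE s : logistic_weight (margin V s) * lin s = \sum_i \sum_j - alpha * G i j *
    (logistic_weight (margin V s) * y s * uw R i * hrelu_deriv h (pre i s) * x s 0 j).
  rewrite /lin mulr_sumr mulr_sumr; apply: eq_bigr => i _.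
  by rewrite /del /rowdot !mulr_sumr; apply: eq_bigr => j _; ring.
rewrite (eq_bigr _ (fun s _ => linE s)) exchange_big /= /frob2 mulr_sumr.
apply: eq_bigr => i _; rewrite exchange_big /= mulr_sumr; apply: eq_bigr => j _.
by rewrite -mulr_sumr -gradE; ring.
Qed.

Lemma loss_step_le : Q <= 450^-1 ->
  loss x y (V - alpha *: G) <=
    loss x y V - alpha * frob2 G + 5 * Q * (n%:R^-1 * \sum_s logistic_weight (margin V s)).
Proof.
move=> Q_le; have n_pos : 0 < n%:R :> R by rewrite ltr0n.
pose w s := logistic_weight (margin V s).
have sum_le : \sum_s logistic (margin (V - alpha *: G) s) <=
    \sum_s (logistic (margin V s) - w s * lin s + 5 * Q * w s).
  apply: ler_sum => s _; rewrite margin_step.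
  exact: logistic_perturb_le (lin_sqr_le s) (curv_abs_le s) Q_le.
rewrite big_split sumrB /= -mulr_sumr sum_weight_lin in sum_le.
apply: le_trans (ler_wpM2l _ sum_le) _; first by rewrite invr_ge0 ltW.
rewrite le_eqVlt; apply/orP; left; apply/eqP; rewrite /loss; field; lra.
Qed.

End LossDescent.

Theorem lemma4 (R : realType) (p d n : nat) (hp : (1 <= p)%N) (hn : (0 < n)%N)
  (x : 'I_n -> 'rV[R]_(d.+1)) (y : 'I_n -> R)
  (hx : forall s, \sum_(j < d.+1) (x s 0 j) ^+ 2 = 1)
  (hy : forall s, y s = 1 \/ y s = -1)
  (V : 'M[R]_(p + p, d.+1)) (alpha : R) (halpha : 0 < alpha)
  (hstep : alpha * loss x y V <= ((30 * p)%:R)^-1) :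
  loss x y (V - alpha *: gradM (loss x y) V)
    <= loss x y V - 5 * alpha * frob2 (gradM (loss x y) V) / 6.
Proof.
set L := loss x y V; set D := frob2 (gradM (loss x y) V).
set Q := p%:R * alpha ^+ 2 * D; set t := p%:R * alpha * L.
have p_gt0 : 0 < p%:R :> R by rewrite ltr0n.
have L_ge0 : 0 <= L := loss_ge0 x y V.
have D_ge0 : 0 <= D := frob2_ge0 _.
have t_ge0 : 0 <= t := mulr_ge0 (mulr_ge0 (ltW p_gt0) (ltW halpha)) L_ge0.
have t_le : t <= 30^-1.
  have := ler_wpM2l (ltW p_gt0) hstep.
  by rewrite natrM invfM [X in _ <= X]mulrCA mulfV ?mulr1 ?gt_eqF // /t -mulrA.
have Q_le : Q <= 450^-1.
  have : Q <= 2 * t ^+ 2.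
    have -> : 2 * t ^+ 2 = p%:R * alpha ^+ 2 * (2 * p%:R * L ^+ 2) by rewrite /t; ring.
    apply: ler_wpM2l; first exact: mulr_ge0 (ltW p_gt0) (sqr_ge0 alpha).
    exact: frob2_gradM_loss_le hp hx hy V.
  nra.
have Q_ge0 : 0 <= Q by rewrite /Q mulr_ge0 // mulr_ge0 ?sqr_ge0 // ltW.
have := loss_step_le hp hn hx hy Q_le; rewrite -/L -/D -/Q.
have := ler_wpM2l Q_ge0 (sum_weight_le_loss x y V); rewrite -/L.
have QL : Q * L = t * (alpha * D) by rewrite /Q /t; ring.
have := ler_wpM2r (mulr_ge0 (ltW halpha) D_ge0) t_le.
lra.
Qed.
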